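(* Let $A$ be a lattice with finite generating set $X$, let $D$ be a lattice with finite generating set $P$ satisfying Dean's condition (D), and let $g\colon A\to D$ be an epimorphism. Assume every $p\in P$ has a least preimage $\beta(p):=\bigwedge g^{-1}(p)$ in $A$ and that $\beta(p)\in H_{X,0}$. Let $k\in\mathbb N$. Then: (1) $\beta_{g,k}(\bigwedge E)=\bigwedge\{\beta_{g,k}(e): e\in E\}\wedge\beta_{g,0}(\bigwedge E)$ for every finite $E\subseteq D$; (2) for every $d\in H_{P,k}$ (computed in $D$ with respect to $P$), the preimage $g^{-1}(d)$ has a least element and it equals $\beta_{g,k}(d)$.
   Context: For a lattice $A$ with finite generating set $X$ and $W\subseteq A$, let $W^\wedge:=\{\bigwedge U: U\subseteq W\text{ finite}\}$ and $W^\vee:=\{\bigvee U: U\subseteq W\text{ finite}\}$, with the conventions $\bigwedge\emptyset:=\bigvee X$ and $\bigvee\emptyset:=\bigwedge X$. Define $G_{X,0}:=X$, $H_{X,k}:=G_{X,k}^\wedge$, $G_{X,k+1}:=H_{X,k}^\vee$ for $k\in\mathbb N$ (and likewise $G_{P,k},H_{P,k}$ in $D$ with respect to $P$). For an epimorphism $g\colon A\to D$: $\beta_{g,k}(d):=\bigwedge\{w\in H_{X,k}: g(w)\ge d\}$. Dean's condition (D) for $D$ with finite generating set $P$: for all finite $S,T\subseteq D$ with $\bigwedge S\le\bigvee T$, either some $s\in S$ has $s\le\bigvee T$, or some $t\in T$ has $\bigwedge S\le t$, or some $p\in P$ has $\bigwedge S\le p\le\bigvee T$. *)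

From HB Require Import structures.
From mathcomp Require Import all_boot all_order.
Set Implicit Arguments. Unset Strict Implicit. Unset Printing Implicit Defensive.
Import Order.TTheory.
Local Open Scope order_scope.

(* A finite generating set is represented as a nonempty list x0 :: X
   (a generating set of a lattice is necessarily nonempty).
   Finite subsets U of a finite set W are represented by the subsequences of
   a list enumerating W (meets/joins are idempotent, so repetitions are
   harmless). *)

Section LatDefs.
Context {d : Order.disp_t} {A : latticeType d}.

Fixpoint subseqs (s : seq A) : seq (seq A) :=
  if s is x :: s' then subseqs s' ++ map (cons x) (subseqs s') else [:: [::]].

Definition bigJ (x0 : A) (X : seq A) : A := foldr Order.join x0 X.
Definition bigM (x0 : A) (X : seq A) : A := foldr Order.meet x0 X.

Definition meetU (x0 : A) (X : seq A) (U : seq A) : A :=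
  if U is u :: U' then foldr Order.meet u U' else bigJ x0 X.
Definition joinU (x0 : A) (X : seq A) (U : seq A) : A :=
  if U is u :: U' then foldr Order.join u U' else bigM x0 X.

Definition meetcl (x0 : A) (X : seq A) (W : seq A) : seq A :=
  map (meetU x0 X) (subseqs W).
Definition joincl (x0 : A) (X : seq A) (W : seq A) : seq A :=
  map (joinU x0 X) (subseqs W).

Fixpoint Gs (x0 : A) (X : seq A) (k : nat) : seq A :=
  if k is k'.+1 then joincl x0 X (meetcl x0 X (Gs x0 X k')) else x0 :: X.
Definition Hs (x0 : A) (X : seq A) (k : nat) : seq A := meetcl x0 X (Gs x0 X k).

Definition generates (x0 : A) (X : seq A) : Prop :=
  forall S : A -> Prop,
    (forall x, x \in x0 :: X -> S x) ->
    (forall a b, S a -> S b -> S (a `&` b)) ->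
    (forall a b, S a -> S b -> S (a `|` b)) ->
    forall a, S a.

Definition deanD (p0 : A) (P : seq A) : Prop :=
  forall S T : seq A, meetU p0 P S <= joinU p0 P T ->
    (exists2 s, s \in S & s <= joinU p0 P T) \/
    (exists2 t, t \in T & meetU p0 P S <= t) \/
    (exists2 p, p \in p0 :: P & meetU p0 P S <= p <= joinU p0 P T).

End LatDefs.

Section Beta.
Context {dA dD : Order.disp_t} {A : latticeType dA} {D : latticeType dD}.

Definition beta (x0 : A) (X : seq A) (g : A -> D) (k : nat) (d : D) : A :=
  meetU x0 X [seq w <- Hs x0 X k | d <= g w].

End Beta.

From HB Require Import structures.
From mathcomp Require Import all_boot all_order.
Import Order.TTheory.
Set Implicit Arguments. Unset Strict Implicit. Unset Printing Implicit Defensive.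
Local Open Scope order_scope.

(* beta_{g,k} is monotone, decreasing in k, and g (beta_{g,k} e) >= e because g
   preserves meets.  So (2) amounts to beta_{g,k} e <= a whenever e <= g a, and (1)
   to the right-hand side lying below every w in H_{X,k} with /\ E <= g w.
   (2) goes by induction on k and, inside H_{P,k} = G_{P,k}^meet, by induction on
   the generation of a: for a = a1 \/ a2, Dean's condition applied to
   /\ S <= g a1 \/ g a2 puts either a meetand of S below g a, or /\ S below some
   g ai, or a generator p in between, whose least preimage lies in H_{X,0}.
   (1) goes by induction on the level j <= k of w; for w = \/ U, Dean's condition
   applied to /\ E <= \/ g(U) gives the same three cases. *)

Lemma mem_subseqs {d : Order.disp_t} {L : latticeType d} (W S : seq L) :
  (S \in subseqs W) = subseq S W.
Proof.
elim: W S => [|w W IH] [|x S] //=; rewrite mem_cat IH ?sub0seq //.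
have [->|neq] := eqVneq x w.
  rewrite (mem_map (fun s t => @congr1 _ _ behead (w :: s) (w :: t))) IH.
  by apply/orb_idl/subseq_trans/subseq_cons.
suff /negPf-> : x :: S \notin map (cons w) (subseqs W) by rewrite orbF.
by apply/mapP => -[T _ [/eqP]]; rewrite (negbTE neq).
Qed.

Section MeetClosure.
Context {d : Order.disp_t} {L : latticeType d} (x0 : L) (X : seq L).

Lemma le_bigJ x : x \in x0 :: X -> x <= bigJ x0 X.
Proof.
elim: X => [|y Y IH]; first by rewrite inE => /eqP->.
rewrite !inE orbCA => /orP[/eqP->|xY]; first exact: leUl.
exact: le_trans (IH xY) (leUr _ _).
Qed.

Lemma generates_le_bigJ : generates x0 X -> forall a, a <= bigJ x0 X.
Proof.
move=> gen; apply: (gen (fun a => a <= bigJ x0 X)) => [x /le_bigJ //|a b ha _|a b ha hb].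
  exact: le_trans (leIl _ _) ha.
by rewrite leUx ha hb.
Qed.

Hypothesis le_top : forall a : L, a <= bigJ x0 X.

Lemma le_meetU z S : (z <= meetU x0 X S) = all (fun s => z <= s) S.
Proof.
case: S => [|u U] /=; first by rewrite le_top.
by elim: U => [|v U IH] /=; rewrite ?andbT // lexI IH andbCA.
Qed.

Lemma meetU_le S s : s \in S -> meetU x0 X S <= s.
Proof. by move=> sS; move: (lexx (meetU x0 X S)); rewrite le_meetU => /allP; apply. Qed.

Lemma meetU_cons s S : meetU x0 X (s :: S) = s `&` meetU x0 X S.
Proof.
have le_cons z : (z <= meetU x0 X (s :: S)) = (z <= s `&` meetU x0 X S).
  by rewrite lexI !le_meetU.
by apply/le_anti/andP; split; [rewrite -le_cons | rewrite le_cons].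
Qed.

Lemma meetU_cat S T : meetU x0 X (S ++ T) = meetU x0 X S `&` meetU x0 X T.
Proof.
elim: S => [|s S IH]; first by rewrite /= meetC; apply/esym/meet_idPl.
by rewrite cat_cons !meetU_cons IH meetA.
Qed.

Lemma eq_meetU S T : S =i T -> meetU x0 X S = meetU x0 X T.
Proof.
move=> eqST; apply/le_anti; rewrite !le_meetU.
by apply/andP; split; apply/allP => s sS; apply: meetU_le; rewrite ?eqST // -eqST.
Qed.

Lemma meetclP a W :
  reflect (exists2 S, {subset S <= W} & a = meetU x0 X S) (a \in meetcl x0 X W).
Proof.
apply: (iffP mapP) => [[S + ->]|[S SW ->]].
  by rewrite mem_subseqs => /mem_subseq; exists S.
exists [seq w <- W | w \in S]; first by rewrite mem_subseqs filter_subseq.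
by apply: eq_meetU => w; rewrite mem_filter (andb_idr (@SW w)).
Qed.

Lemma meetcl_gen W : {subset W <= meetcl x0 X W}.
Proof. by move=> w wW; apply/meetclP; exists [:: w] => // v /[!inE] /eqP->. Qed.

Lemma meetcl_mono W W' : {subset W <= W'} -> {subset meetcl x0 X W <= meetcl x0 X W'}.
Proof. by move=> sWW' a /meetclP[S SW ->]; apply/meetclP; exists S => // s /SW/sWW'. Qed.

Lemma meetcl_closed W S :
  {subset S <= meetcl x0 X W} -> meetU x0 X S \in meetcl x0 X W.
Proof.
elim: S => [|s S IH] SW; first by apply/meetclP; exists [::].
rewrite meetU_cons.
have /meetclP[S2 S2W ->] : meetU x0 X S \in meetcl x0 X W.
  by apply: IH => t tS; apply: SW; rewrite inE tS orbT.
have /meetclP[S1 S1W ->] := SW s (mem_head s S).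
apply/meetclP; exists (S1 ++ S2); last by rewrite meetU_cat.
by move=> x; rewrite mem_cat => /orP[/S1W|/S2W].
Qed.

Lemma meetcl_ind (Q : L -> Prop) W :
  Q (bigJ x0 X) -> (forall a b, Q a -> Q b -> Q (a `&` b)) ->
  {in W, forall w, Q w} -> {in meetcl x0 X W, forall a, Q a}.
Proof.
move=> Qtop QI QW a /meetclP[S]; elim: S a => [|s S IH] a SW -> //.
rewrite meetU_cons; apply: QI; first exact/QW/SW/mem_head.
by apply: IH => // t tS; apply: SW; rewrite inE tS orbT.
Qed.

End MeetClosure.

(* Over L^d, meetU, meetcl and bigJ compute joinU, joincl and bigM of L. *)
Section JoinClosure.
Context {d : Order.disp_t} {L : latticeType d} (x0 : L) (X : seq L).

Lemma generates_bigM_le : generates x0 X -> forall a, bigM x0 X <= a.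
Proof. by move=> gen; apply: (@generates_le_bigJ _ L^d) => S SX SU SI; apply: gen. Qed.

Hypothesis bot_le : forall a : L, bigM x0 X <= a.

Lemma joinU_le S z : (joinU x0 X S <= z) = all (fun s => s <= z) S.
Proof. exact: (@le_meetU _ L^d x0 X bot_le z S). Qed.

Lemma le_joinU S s : s \in S -> s <= joinU x0 X S.
Proof. exact: (@meetU_le _ L^d x0 X bot_le S s). Qed.

Lemma joinclP a W :
  reflect (exists2 S, {subset S <= W} & a = joinU x0 X S) (a \in joincl x0 X W).
Proof. exact: (@meetclP _ L^d x0 X bot_le a W). Qed.

Lemma joincl_gen W : {subset W <= joincl x0 X W}.
Proof. exact: (@meetcl_gen _ L^d x0 X bot_le W). Qed.

End JoinClosure.

Section Levels.
Context {d : Order.disp_t} {L : latticeType d} (x0 : L) (X : seq L).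
Hypothesis gen : generates x0 X.

Lemma Gs_sub_Hs k : {subset Gs x0 X k <= Hs x0 X k}.
Proof. exact/meetcl_gen/generates_le_bigJ. Qed.

Lemma Hs_sub_Gs k : {subset Hs x0 X k <= Gs x0 X k.+1}.
Proof. exact/joincl_gen/generates_bigM_le. Qed.

Lemma Hs_mono j k : j <= k -> {subset Hs x0 X j <= Hs x0 X k}.
Proof.
move/subnK<-; elim: (k - j) => // n IH a /IH.
rewrite addSn; apply: (meetcl_mono (generates_le_bigJ gen)) => b.
by move/Gs_sub_Hs/Hs_sub_Gs.
Qed.

Lemma generator_in_Hs k x : x \in x0 :: X -> x \in Hs x0 X k.
Proof. by move=> xX; apply: (Hs_mono (leq0n k)); apply: (@Gs_sub_Hs 0). Qed.

End Levels.

Section LatticeMorphism.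
Context {dA dD : Order.disp_t} {A : latticeType dA} {D : latticeType dD}.
Variables (x0 : A) (X : seq A) (p0 : D) (P : seq D) (g : A -> D).
Hypotheses (topA : forall a, a <= bigJ x0 X) (topD : forall e, e <= bigJ p0 P).
Hypotheses (g_meet : forall a b, g (a `&` b) = g a `&` g b)
  (g_surj : forall e, exists a, g a = e).

Lemma meet_morph_homo : {homo g : a b / a <= b}.
Proof. by move=> a b /meet_idPl ab; rewrite -ab g_meet leIr. Qed.

Lemma morph_meetU U : g (meetU x0 X U) = meetU p0 P (map g U).
Proof.
elim: U => [|u U IH]; last by rewrite map_cons (meetU_cons topA) (meetU_cons topD) g_meet IH.
have [a ga] := g_surj (bigJ p0 P).
by apply/le_anti; rewrite /= topD -ga meet_morph_homo ?topA.
Qed.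

End LatticeMorphism.

Lemma morph_joinU {dA dD : Order.disp_t} {A : latticeType dA} {D : latticeType dD}
    (x0 : A) (X : seq A) (p0 : D) (P : seq D) (g : A -> D) :
  (forall a, bigM x0 X <= a) -> (forall e, bigM p0 P <= e) ->
  (forall a b, g (a `|` b) = g a `|` g b) -> (forall e, exists a, g a = e) ->
  forall U, g (joinU x0 X U) = joinU p0 P (map g U).
Proof. exact: (@morph_meetU _ _ A^d D^d). Qed.

Section LeastPreimage.
Context {dA dD : Order.disp_t} {A : latticeType dA} {D : latticeType dD}.
Variables (x0 : A) (X : seq A) (p0 : D) (P : seq D) (g : A -> D).
Hypotheses (genA : generates x0 X) (genD : generates p0 P) (dean : deanD p0 P).
Hypotheses (g_meet : forall a b, g (a `&` b) = g a `&` g b)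
  (g_join : forall a b, g (a `|` b) = g a `|` g b)
  (g_surj : forall e, exists a, g a = e).
Hypothesis P_least : forall p, p \in p0 :: P ->
  exists b : A, [/\ g b = p, (forall a, g a = p -> b <= a) & b \in Hs x0 X 0].

Let topA := generates_le_bigJ genA.
Let botA := generates_bigM_le genA.
Let topD := generates_le_bigJ genD.
Let botD := generates_bigM_le genD.
Let g_mono := meet_morph_homo g_meet.
Let g_meetU := morph_meetU topA topD g_meet g_surj.
Let g_joinU := morph_joinU botA botD g_join g_surj.

Lemma P_least_le p : p \in p0 :: P ->
  exists b, [/\ b \in Hs x0 X 0, g b = p & forall a, p <= g a -> b <= a].
Proof.
case/P_least=> b [gb bmin bH]; exists b; split=> // a pa.
by apply: le_trans (bmin (a `&` b) _) (leIl _ _); rewrite g_meet gb; apply/meet_idPr.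
Qed.

Lemma beta_le k e w : w \in Hs x0 X k -> e <= g w -> beta x0 X g k e <= w.
Proof. by move=> wH ew; apply: (meetU_le topA); rewrite mem_filter ew. Qed.

Lemma le_beta k e z :
  (forall w, w \in Hs x0 X k -> e <= g w -> z <= w) -> z <= beta x0 X g k e.
Proof.
move=> zw; rewrite (le_meetU topA); apply/allP => w.
by rewrite mem_filter => /andP[ew /zw]; apply.
Qed.

Lemma beta_ge k e : e <= g (beta x0 X g k e).
Proof.
rewrite g_meetU (le_meetU topD); apply/allP => x /mapP[w + ->].
by rewrite mem_filter => /andP[].
Qed.

Lemma beta_mono k : {homo beta x0 X g k : e e' / e <= e'}.
Proof. by move=> e e' ee'; apply: le_beta => w wH /(le_trans ee'); apply: beta_le. Qed.

Lemma beta_in k e : beta x0 X g k e \in Hs x0 X k.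
Proof. by apply: (meetcl_closed topA) => w; rewrite mem_filter => /andP[]. Qed.

Lemma beta_level_le j k e : j <= k -> beta x0 X g k e <= beta x0 X g j e.
Proof. by move=> jk; apply: le_beta => w /(Hs_mono genA jk); apply: beta_le. Qed.

Lemma beta_P_le k p a : p \in p0 :: P -> p <= g a -> beta x0 X g k p <= a.
Proof.
case/P_least_le=> b [bH gb bmin] pa; apply: le_trans (bmin _ pa).
by apply: beta_le; [exact: Hs_mono (leq0n k) _ bH | rewrite gb].
Qed.

Definition beta_adjoint k e := forall a, e <= g a -> beta x0 X g k e <= a.

Lemma beta_adjoint_meetcl k W :
  {in W, forall e, beta_adjoint k e} -> {in meetcl p0 P W, forall e, beta_adjoint k e}.
Proof.
move=> adjW _ /(meetclP topD)[S SW ->] a; elim/genA: a.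
- by move=> x /(generator_in_Hs genA k) xH; apply: beta_le.
- move=> a b IHa IHb; rewrite g_meet lexI => /andP[/IHa Sa /IHb Sb].
  by rewrite lexI Sa Sb.
- move=> a b IHa IHb; rewrite g_join => Sab.
  case: (dean (T := [:: g b; g a]) Sab) =>
    [[s sS sab]|[[t /[!inE] /orP[]/eqP-> St]|[p pP /andP[Sp pab]]]].
  + apply: le_trans (beta_mono k (meetU_le topD sS)) _.
    by apply: adjW (SW _ sS) _ _; rewrite g_join.
  + exact: le_trans (IHb St) (leUr _ _).
  + exact: le_trans (IHa St) (leUl _ _).
  + apply: le_trans (beta_mono k Sp) _.
    by apply: beta_P_le pP _; rewrite g_join.
Qed.

Lemma beta_adjoint_joincl k W :
  {in W, forall e, beta_adjoint k e} -> {in joincl p0 P W, forall e, beta_adjoint k.+1 e}.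
Proof.
move=> adjW _ /(joinclP botD)[T TW ->] a Ta.
set c := joinU x0 X (map (beta x0 X g k) T).
have cH : c \in Hs x0 X k.+1.
  apply/(Gs_sub_Hs genA)/(joinclP botA); exists (map (beta x0 X g k) T) => //.
  by move=> _ /mapP[t _ ->]; apply: beta_in.
apply: le_trans (beta_le cH _) _.
  rewrite (joinU_le botD); apply/allP => t tT; apply: le_trans (beta_ge k t) (g_mono _).
  exact/(le_joinU botA)/map_f.
rewrite (joinU_le botA); apply/allP => _ /mapP[t tT ->]; apply: adjW (TW _ tT) _ _.
exact: le_trans (le_joinU botD tT) Ta.
Qed.

Lemma beta_adjoint_Gs k : {in Gs p0 P k, forall e, beta_adjoint k e}.
Proof.
elim: k => [|k IH]; first by move=> p pP a; apply: beta_P_le.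
exact/beta_adjoint_joincl/beta_adjoint_meetcl.
Qed.

Lemma beta_least_preimage k e : e \in Hs p0 P k ->
  g (beta x0 X g k e) = e /\ (forall a, g a = e -> beta x0 X g k e <= a).
Proof.
move=> /(beta_adjoint_meetcl (@beta_adjoint_Gs k)) adj.
split=> [|a ga]; last by apply: adj; rewrite ga.
have [a ga] := g_surj e.
apply/le_anti; rewrite beta_ge andbT -[X in _ <= X]ga.
by apply/g_mono/adj; rewrite ga.
Qed.

Section BetaMeetU.
Variables (k : nat) (E : seq D).
Let d := meetU p0 P E.
Let R := meetU x0 X (map (beta x0 X g k) E) `&` beta x0 X g 0 d.
Let R_below w := d <= g w -> R <= w.

Lemma R_below_Hs0 : {in Hs x0 X 0, forall w, R_below w}.
Proof. by move=> w wH dw; apply: le_trans (leIr _ _) (beta_le wH dw). Qed.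

Lemma R_below_joincl j : j < k ->
  {in Hs x0 X j, forall w, R_below w} -> {in joincl x0 X (Hs x0 X j), forall w, R_below w}.
Proof.
move=> jk belowH _ /(joinclP botA)[U UH ->]; rewrite /R_below g_joinU => dU.
have UkH : joinU x0 X U \in Hs x0 X k.
  apply: (Hs_mono genA jk); apply/(Gs_sub_Hs genA)/(joinclP botA); by exists U.
case: (dean dU) => [[e eE ew]|[[_ /mapP[u uU ->] du]|[p pP /andP[dp pU]]]].
- rewrite -g_joinU in ew; apply: le_trans (leIl _ _) _.
  exact: le_trans (meetU_le topA (map_f _ eE)) (beta_le UkH ew).
- exact: le_trans (belowH u (UH _ uU) du) (le_joinU botA uU).
- have [b [bH gb bmin]] := P_least_le pP; rewrite -g_joinU in pU.
  by apply: le_trans (bmin _ pU); apply: R_below_Hs0 bH _; rewrite gb.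
Qed.

Lemma R_below_Hs j : j <= k -> {in Hs x0 X j, forall w, R_below w}.
Proof.
elim: j => [|j IH] jk; first exact: R_below_Hs0.
apply: (meetcl_ind topA) => [_|a b Ra Rb|w wG]; first exact: topA.
  by rewrite /R_below g_meet !lexI => /andP[/Ra -> /Rb ->].
exact: R_below_joincl jk (IH (ltnW jk)) w wG.
Qed.

Lemma beta_meetU : beta x0 X g k d = R.
Proof.
apply/le_anti/andP; split; last by apply: le_beta => w; apply: R_below_Hs.
rewrite lexI beta_level_le // andbT (le_meetU topA).
by apply/allP => _ /mapP[e eE ->]; apply/beta_mono/(meetU_le topD).
Qed.

End BetaMeetU.
End LeastPreimage.

Theorem mainTheorem10 (dA dD : Order.disp_t) (A : latticeType dA) (D : latticeType dD)
  (x0 : A) (X : seq A) (p0 : D) (P : seq D) (g : A -> D) :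
  generates x0 X ->
  generates p0 P ->
  deanD p0 P ->
  (forall a b : A, g (a `&` b) = g a `&` g b) ->
  (forall a b : A, g (a `|` b) = g a `|` g b) ->
  (forall e : D, exists a : A, g a = e) ->
  (forall p, p \in p0 :: P ->
     exists b : A, [/\ g b = p, (forall a, g a = p -> b <= a) & b \in Hs x0 X 0]) ->
  forall k : nat,
    (forall E : seq D,
       beta x0 X g k (meetU p0 P E) =
       meetU x0 X (map (beta x0 X g k) E) `&` beta x0 X g 0 (meetU p0 P E)) /\
    (forall e : D, e \in Hs p0 P k ->
       g (beta x0 X g k e) = e /\ (forall a : A, g a = e -> beta x0 X g k e <= a)).
Proof.
move=> genA genD dean g_meet g_join g_surj P_least k; split=> [E|e].
  exact: (beta_meetU genA genD dean g_meet g_join g_surj P_least).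
exact: (beta_least_preimage genA genD dean g_meet g_join g_surj P_least).
Qed.
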